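(* Let $\mathscr{A},\mathscr{B}$ be real Banach spaces and let $p,p'\in(1,+\infty)$ with $1/p+1/p'=1$. Suppose that $(\lambda,\mu)\in(\mathscr{A}^*\oplus_{p'}\mathscr{B}^* )\setminus\{(0,0)\}$ is norming for $(\mathbf{a},\mathbf{b})\in(\mathscr{A}\oplus_p\mathscr{B})\setminus\{(0,0)\}$. Then: 1. If $\mathbf{b}=0$, then $\mu=0$ and $\lambda$ is norming for $\mathbf{a}$. 2. If $\mathbf{a}=0$, then $\lambda=0$ and $\mu$ is norming for $\mathbf{b}$. 3. If $\mathbf{a}\neq0$ and $\mathbf{b}\neq0$, then $\lambda\neq0$, $\mu\neq0$, $\big(1+\|\mathbf{b}\|_{\mathscr{B}}^p/\|\mathbf{a}\|_{\mathscr{A}}^p\big)^{1/p'}\lambda$ is norming for $\mathbf{a}$, and $\big(1+\|\mathbf{a}\|_{\mathscr{A}}^p/\|\mathbf{b}\|_{\mathscr{B}}^p\big)^{1/p'}\mu$ is norming for $\mathbf{b}$.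
   Context: For Banach spaces $\mathscr{A},\mathscr{B}$ and $q\in[1,\infty)$, $\mathscr{A}\oplus_q\mathscr{B}$ is the Cartesian product with componentwise operations and norm $\|(\mathbf{a},\mathbf{b})\|=(\|\mathbf{a}\|_{\mathscr{A}}^q+\|\mathbf{b}\|_{\mathscr{B}}^q)^{1/q}$. The dual of $\mathscr{A}\oplus_p\mathscr{B}$ is identified with $\mathscr{A}^*\oplus_{p'}\mathscr{B}^*$ via the pairing $\langle(\mathbf{a},\mathbf{b}),(\lambda,\mu)\rangle=\lambda(\mathbf{a})+\mu(\mathbf{b})$. A functional $\phi$ in the dual of a Banach space $\mathscr{C}$ is norming for a nonzero $\mathbf{c}\in\mathscr{C}$ if $\|\phi\|=1$ and $\phi(\mathbf{c})=\|\mathbf{c}\|_{\mathscr{C}}$. *)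

From HB Require Import structures.
From mathcomp Require Import all_boot all_order all_algebra.
From mathcomp Require Import all_classical all_reals all_analysis.
Set Implicit Arguments. Unset Strict Implicit. Unset Printing Implicit Defensive.
Import Order.TTheory GRing.Theory Num.Theory.
Import numFieldNormedType.Exports.
Local Open Scope classical_set_scope.
Local Open Scope ring_scope.

Definition dual_norm {R : realType} {V : normedModType R} (f : V -> R) : R :=
  sup [set `|f x| | x in [set x : V | `|x| <= 1]].

Definition norming {R : realType} {V : normedModType R} (f : V -> R) (c : V) : Prop :=
  dual_norm f = 1 /\ f c = `|c|.

Definition pnorm2 {R : realType} (q s t : R) : R :=
  (s `^ q + t `^ q) `^ q^-1.

(* (lam, mu) in A^* (+)_{p'} B^* is norming for (a, b) in A (+)_p B:
   the p'-norm of (||lam||, ||mu||) is 1 and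
   lam a + mu b = (||a||^p + ||b||^p)^(1/p). *)
Definition norming_pair {R : realType} {A B : normedModType R} (p p' : R)
  (lam : A -> R) (mu : B -> R) (a : A) (b : B) : Prop :=
  pnorm2 p' (dual_norm lam) (dual_norm mu) = 1 /\
  lam a + mu b = pnorm2 p `|a| `|b|.

From HB Require Import structures.
From mathcomp Require Import all_boot all_order all_algebra.
From mathcomp Require Import all_classical all_reals all_analysis.
From mathcomp Require Import ring lra.
Import Order.TTheory GRing.Theory Num.Theory.
Import numFieldNormedType.Exports.
Local Open Scope classical_set_scope.
Local Open Scope ring_scope.

Set Implicit Arguments.
Unset Strict Implicit.
Unset Printing Implicit Defensive.

(* Write x = |a|, y = |b|, al = ||lam||, be = ||mu|| and N = (x^p + y^p)^(1/p).
   Then N = lam a + mu b <= al x + be y, while Young's inequality applied to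
   (x/N, al) and (y/N, be) gives al x + be y <= N.  Hence lam a = al x,
   mu b = be y, and both Young inequalities are equalities, which forces
   (x/N)^p = al^p' and (y/N)^p = be^p'.  The first identity says that the
   rescaling factor (1 + y^p/x^p)^(1/p') = (N^p/x^p)^(1/p') is exactly 1/al. *)

Section PowR.
Variable R : realType.
Implicit Types (a b p q s t w x y : R).

Lemma expR_convex_eq w x y : 0 < w < 1 ->
  w * expR x + (1 - w) * expR y = expR (w * x + (1 - w) * y) -> x = y.
Proof.
move=> /andP[w_gt0 w_lt1]; set m := w * x + (1 - w) * y => heq.
have expR_shift z : expR z = expR m * expR (z - m) by rewrite -expRD addrC subrK.
have tangent z : expR m * (1 + (z - m)) <= expR z.
  by rewrite [expR z]expR_shift ler_pM2l ?expR_gt0 // expR_ge1Dx.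
have xm : x = m.
  apply/eqP/negPn/negP => x_neq_m.
  have tangent_x : expR m * (1 + (x - m)) < expR x.
    by rewrite [expR x]expR_shift ltr_pM2l ?expR_gt0 // expR_gt1Dx // subr_eq0.
  have tangent_y := tangent y.
  (* the weighted mean of the two tangent values is expR m, contradicting heq *)
  have : w * (expR m * (1 + (x - m))) + (1 - w) * (expR m * (1 + (y - m)))
         = expR m by rewrite /m; ring.
  nra.
have : (1 - w) * y = (1 - w) * x by move: xm; rewrite /m; lra.
by move/mulfI => -> //; rewrite subr_eq0 gt_eqF.
Qed.

Lemma conjugate_powR_eq a b p q : 0 <= a -> 0 <= b -> 0 < p -> 0 < q ->
  p^-1 + q^-1 = 1 -> a * b = a `^ p / p + b `^ q / q -> a `^ p = b `^ q.
Proof.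
move=> a_ge0 b_ge0 p_gt0 q_gt0 pq.
have [->|a_neq0] := eqVneq a 0.
  rewrite mul0r powR0 ?gt_eqF // mul0r add0r => /esym /eqP.
  by rewrite mulf_eq0 invr_eq0 (gt_eqF q_gt0) orbF => /eqP ->.
have [->|b_neq0] := eqVneq b 0.
  rewrite mulr0 powR0 ?gt_eqF // mul0r addr0 => /esym /eqP.
  by rewrite mulf_eq0 invr_eq0 (gt_eqF p_gt0) orbF => /eqP ->.
have a_gt0 : 0 < a by rewrite lt0r a_neq0.
have b_gt0 : 0 < b by rewrite lt0r b_neq0.
rewrite /powR (negbTE a_neq0) (negbTE b_neq0) => heq.
congr expR; apply: (@expR_convex_eq p^-1).
  by rewrite invr_gt0 p_gt0 -pq ltrDl invr_gt0.
have -> : 1 - p^-1 = q^-1 by lra.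
by rewrite !mulKf ?gt_eqF // expRD !lnK ?posrE // heq; ring.
Qed.

Lemma powRVK x q : 0 <= x -> q != 0 -> (x `^ q^-1) `^ q = x.
Proof. by move=> x_ge0 q_neq0; rewrite -powRrM mulVf // powRr1. Qed.

Lemma powR_div x y p : 0 <= x -> 0 < y -> (x / y) `^ p = x `^ p / y `^ p.
Proof.
move=> x_ge0 y_gt0; rewrite powRM // ?invr_ge0 ?ltW //.
by rewrite -powR_inv1 ?ltW // -powRrM mulN1r powRN.
Qed.

Lemma pnorm2_powR q s t : q != 0 -> pnorm2 q s t `^ q = s `^ q + t `^ q.
Proof. by move=> q_neq0; rewrite powRVK // addr_ge0 ?powR_ge0. Qed.

Lemma pnorm2C q s t : pnorm2 q s t = pnorm2 q t s.
Proof. by rewrite /pnorm2 addrC. Qed.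

Section Hoelder2.
Variables (p q : R).
Hypotheses (p_gt0 : 0 < p) (q_gt0 : 0 < q) (pq : p^-1 + q^-1 = 1).
Variables (u v s t : R).
Hypotheses (u_ge0 : 0 <= u) (v_ge0 : 0 <= v) (s_ge0 : 0 <= s) (t_ge0 : 0 <= t).
Hypotheses (uv1 : u `^ p + v `^ p = 1) (st1 : s `^ q + t `^ q = 1).

Let young_sum :
  u `^ p / p + s `^ q / q + (v `^ p / p + t `^ q / q) = 1.
Proof.
have -> : u `^ p / p + s `^ q / q + (v `^ p / p + t `^ q / q) =
  (u `^ p + v `^ p) / p + (s `^ q + t `^ q) / q by ring.
by rewrite uv1 st1 !mul1r.
Qed.

Lemma hoelder2 : u * s + v * t <= 1.
Proof.
have young_us := conjugate_powR u_ge0 s_ge0 p_gt0 q_gt0 pq.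
have young_vt := conjugate_powR v_ge0 t_ge0 p_gt0 q_gt0 pq.
have sum_young := young_sum.
lra.
Qed.

Lemma hoelder2_eq : u * s + v * t = 1 -> u `^ p = s `^ q /\ v `^ p = t `^ q.
Proof.
move=> sum1.
have young_us := conjugate_powR u_ge0 s_ge0 p_gt0 q_gt0 pq.
have young_vt := conjugate_powR v_ge0 t_ge0 p_gt0 q_gt0 pq.
have sum_young := young_sum.
by split; apply: conjugate_powR_eq => //; lra.
Qed.

End Hoelder2.
End PowR.

Section DualNorm.
Variables (R : realType) (V : normedModType R) (f : V -> R) (r : R).
Hypothesis f_le : forall x, `|f x| <= r * `|x|.

Lemma dual_norm_has_sup : has_sup [set `|f x| | x in [set x : V | `|x| <= 1]].
Proof.
split; first by exists `|f 0|, 0 => //=; rewrite normr0.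
exists `|r| => _ [x /= x_le1 <-].
rewrite (le_trans (f_le x)) // (le_trans (ler_norm _)) // normrM normr_id.
by rewrite ler_piMr.
Qed.

Lemma dual_norm_ge0 : 0 <= dual_norm f.
Proof.
apply: (le_trans (normr_ge0 (f 0))); apply: (sup_upper_bound dual_norm_has_sup).
by exists 0 => //=; rewrite normr0.
Qed.

Lemma ler_dual_norm : (forall c x, f (c *: x) = c * f x) ->
  forall z, `|f z| <= dual_norm f * `|z|.
Proof.
move=> fZ z; have [->|z_neq0] := eqVneq z 0.
  by rewrite -(scale0r 0) fZ mul0r scale0r !normr0 mulr0.
have z_gt0 : 0 < `|z| by rewrite normr_gt0.
have -> : `|f z| = `|f (`|z|^-1 *: z)| * `|z|.
  by rewrite fZ normrM normfV normr_id mulrAC mulVf ?mul1r // gt_eqF.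
rewrite ler_pM2r //.
apply: (sup_upper_bound dual_norm_has_sup); exists (`|z|^-1 *: z) => //=.
by rewrite normrZ normfV normr_id mulVf ?gt_eqF.
Qed.

End DualNorm.

Lemma dual_normZ (R : realType) (V : normedModType R) (f : V -> R) (r c : R) :
  (forall x, `|f x| <= r * `|x|) -> 0 < c ->
  dual_norm (fun x => c * f x) = c * dual_norm f.
Proof.
move=> f_le c_gt0; have f_sup := dual_norm_has_sup f_le.
have cf_le x : `|c * f x| <= c * r * `|x|.
  by rewrite normrM gtr0_norm // -mulrA ler_pM2l.
have cf_sup := dual_norm_has_sup cf_le.
apply/eqP; rewrite eq_le; apply/andP; split.
  apply: ge_sup; first by case: cf_sup.
  move=> _ [x /= x_le1 <-]; rewrite normrM gtr0_norm // ler_pM2l //.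
  by apply: (sup_upper_bound f_sup); exists x.
rewrite -ler_pdivlMl //; apply: ge_sup; first by case: f_sup.
move=> _ [x /= x_le1 <-]; rewrite ler_pdivlMl //.
have -> : c * `|f x| = `|c * f x| by rewrite normrM gtr0_norm.
by apply: (sup_upper_bound cf_sup); exists x.
Qed.

Lemma continuous_linear_le_dual_norm (R : realType) (V : normedModType R)
    (f : {linear V -> R^o}) :
  continuous (f : V -> R) -> forall z, `|f z| <= dual_norm (f : V -> R) * `|z|.
Proof.
move=> f_cont; have /(linear_boundedP f).1 := continuous_linear_bounded 0 (f_cont 0).
move=> /pinfty_ex_gt0[r _ f_le]; apply: (ler_dual_norm f_le) => c x.
exact: linearZ.
Qed.

Lemma norming_pairC (R : realType) (A B : normedModType R) (p p' : R)
    (lam : A -> R) (mu : B -> R) (a : A) (b : B) :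
  norming_pair p p' lam mu a b -> norming_pair p p' mu lam b a.
Proof. by rewrite /norming_pair addrC pnorm2C [pnorm2 p _ _]pnorm2C. Qed.

Section NormingPair.
Variables (R : realType) (A B : normedModType R) (p p' : R).
Hypotheses (p_gt1 : 1 < p) (p'_gt1 : 1 < p') (pp' : p^-1 + p'^-1 = 1).
Variables (lam : {linear A -> R^o}) (mu : {linear B -> R^o}).
Hypotheses (lam_cont : continuous (lam : A -> R)) (mu_cont : continuous (mu : B -> R)).
Variables (a : A) (b : B).
Hypotheses (ab_neq0 : ~ (a = 0 /\ b = 0)) (lm_norming : norming_pair p p' lam mu a b).

Local Notation al := (dual_norm (lam : A -> R)).
Local Notation be := (dual_norm (mu : B -> R)).
Let N := pnorm2 p `|a| `|b|.

Let p_gt0 : 0 < p. Proof. exact: lt_trans ltr01 p_gt1. Qed.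
Let p'_gt0 : 0 < p'. Proof. exact: lt_trans ltr01 p'_gt1. Qed.
Let lam_le := continuous_linear_le_dual_norm lam_cont.
Let mu_le := continuous_linear_le_dual_norm mu_cont.
Let al_ge0 := dual_norm_ge0 lam_le.
Let be_ge0 := dual_norm_ge0 mu_le.

Let N_powR : N `^ p = `|a| `^ p + `|b| `^ p.
Proof. by rewrite pnorm2_powR ?gt_eqF. Qed.

Let N_gt0 : 0 < N.
Proof.
apply: powR_gt0; have [a0|a_neq0] := eqVneq a 0.
  have b_neq0 : b != 0 by apply/eqP => b0; apply: ab_neq0.
  by rewrite ltr_pwDr ?powR_ge0 // powR_gt0 ?normr_gt0.
by rewrite ltr_pwDl ?powR_ge0 // powR_gt0 ?normr_gt0.
Qed.

Let norming_pair_equality :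
  lam a = al * `|a| /\ (`|a| / N) `^ p = al `^ p'.
Proof.
have [hal hsum] := lm_norming; fold N in hsum.
have al_be1 : al `^ p' + be `^ p' = 1 by rewrite -pnorm2_powR ?gt_eqF // hal powR1.
have uv1 : (`|a| / N) `^ p + (`|b| / N) `^ p = 1.
  by rewrite !powR_div // -mulrDl -N_powR divff // gt_eqF // powR_gt0.
have u_ge0 : 0 <= `|a| / N by rewrite divr_ge0 ?normr_ge0 ?ltW.
have v_ge0 : 0 <= `|b| / N by rewrite divr_ge0 ?normr_ge0 ?ltW.
have scaled : `|a| / N * al + `|b| / N * be = (al * `|a| + be * `|b|) / N.
  by rewrite mulrDl; ring.
have sum_le : al * `|a| + be * `|b| <= N.
  rewrite -[N]mul1r -ler_pdivrMr // -scaled.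
  by have := hoelder2 p_gt0 p'_gt0 pp' u_ge0 v_ge0 al_ge0 be_ge0 uv1 al_be1.
have lam_a := le_trans (ler_norm _) (lam_le a).
have mu_b := le_trans (ler_norm _) (mu_le b).
have sum_eq : al * `|a| + be * `|b| = N by lra.
have sum1 : `|a| / N * al + `|b| / N * be = 1.
  by rewrite scaled sum_eq divff // gt_eqF.
split; first lra.
by have [] := hoelder2_eq p_gt0 p'_gt0 pp' u_ge0 v_ge0 al_ge0 be_ge0 uv1 al_be1 sum1.
Qed.

Lemma norming_pair_eq0 : a = 0 -> (lam : A -> R) = fun=> 0.
Proof.
move=> a0; have [_] := norming_pair_equality.
rewrite a0 normr0 mul0r powR0 ?gt_eqF // => /esym /powR_eq0_eq0 al0.
by apply: funext => z; apply/eqP; rewrite -normr_le0 -(mul0r `|z|) -al0.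
Qed.

Lemma norming_pair_norming : a != 0 ->
  norming (fun x : A => (1 + `|b| `^ p / `|a| `^ p) `^ p'^-1 * lam x) a.
Proof.
move=> a_neq0; have [lam_a hu] := norming_pair_equality.
have ap_gt0 : 0 < `|a| `^ p by rewrite powR_gt0 ?normr_gt0.
have K_gt0 : 0 < 1 + `|b| `^ p / `|a| `^ p.
  by rewrite ltr_pwDl // divr_ge0 ?powR_ge0.
set c := _ `^ p'^-1.
have c_gt0 : 0 < c by rewrite powR_gt0.
have c_al : c * al = 1.
  apply: (powR_injective p'_gt0); rewrite ?nnegrE ?(mulr_ge0 (ltW c_gt0)) //=.
  rewrite powR1 powRM ?(ltW c_gt0) // /c powRVK ?ltW ?gt_eqF //.
  rewrite -hu powR_div // N_powR.
  by field; rewrite !gt_eqF //; apply: ltr_pwDl; rewrite ?powR_ge0.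
split; first by rewrite (dual_normZ lam_le c_gt0).
by rewrite lam_a mulrA c_al mul1r.
Qed.

Lemma norming_pair_neq0 : a != 0 -> (lam : A -> R) <> fun=> 0.
Proof.
move=> a_neq0 lam0; have [_] := norming_pair_norming a_neq0.
by rewrite lam0 mulr0 => /esym /normr0_eq0 /eqP; rewrite (negbTE a_neq0).
Qed.

Lemma norming_pair_norming_of_eq0 : b = 0 -> norming lam a.
Proof.
move=> b0; have a_neq0 : a != 0 by apply/eqP => a0; apply: ab_neq0.
have := norming_pair_norming a_neq0.
rewrite b0 normr0 powR0 ?gt_eqF // mul0r addr0 powR1.
by under eq_fun do rewrite mul1r.
Qed.

End NormingPair.

Theorem proposition3p1 (R : realType) (A B : completeNormedModType R)
  (p p' : R) (hp : 1 < p) (hp' : 1 < p') (hpp' : p^-1 + p'^-1 = 1)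
  (lam : {linear A -> R^o}) (mu : {linear B -> R^o})
  (lam_cont : continuous (lam : A -> R)) (mu_cont : continuous (mu : B -> R))
  (a : A) (b : B)
  (hlm : ~ ((lam : A -> R) = (fun=> 0) /\ (mu : B -> R) = (fun=> 0)))
  (hab : ~ (a = 0 /\ b = 0))
  (hnorm : norming_pair p p' lam mu a b) :
  (b = 0 -> (mu : B -> R) = (fun=> 0) /\ norming lam a) /\
  (a = 0 -> (lam : A -> R) = (fun=> 0) /\ norming mu b) /\
  (a != 0 -> b != 0 ->
     (lam : A -> R) <> (fun=> 0) /\ (mu : B -> R) <> (fun=> 0) /\
     norming (fun x : A => (1 + `|b| `^ p / `|a| `^ p) `^ p'^-1 * lam x) a /\
     norming (fun y : B => (1 + `|a| `^ p / `|b| `^ p) `^ p'^-1 * mu y) b).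
Proof.
have hba : ~ (b = 0 /\ a = 0) by case=> b0 a0; apply: hab.
have hnormC := norming_pairC hnorm.
split; [|split].
- move=> b0; split.
    exact: (norming_pair_eq0 hp hp' hpp' mu_cont lam_cont hba hnormC b0).
  exact: (norming_pair_norming_of_eq0 hp hp' hpp' lam_cont mu_cont hab hnorm b0).
- move=> a0; split.
    exact: (norming_pair_eq0 hp hp' hpp' lam_cont mu_cont hab hnorm a0).
  exact: (norming_pair_norming_of_eq0 hp hp' hpp' mu_cont lam_cont hba hnormC a0).
- move=> a_neq0 b_neq0; split; [|split; [|split]].
  + exact: (norming_pair_neq0 hp hp' hpp' lam_cont mu_cont hab hnorm a_neq0).
  + exact: (norming_pair_neq0 hp hp' hpp' mu_cont lam_cont hba hnormC b_neq0).
  + exact: (norming_pair_norming hp hp' hpp' lam_cont mu_cont hab hnorm a_neq0).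
  + exact: (norming_pair_norming hp hp' hpp' mu_cont lam_cont hba hnormC b_neq0).
Qed.
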